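(* For every integer $n\ge 1$, $$\Phi^{(1)}[a; bq^n, b'; c; x, y] = \Phi^{(1)}[a; b, b'; c; x, y] + \frac{bx(1-a)}{1-c} \sum_{k=1}^n q^{k-1} \Phi^{(1)}[aq; bq^k, b'; cq; x, y]$$ and $$\Phi^{(1)}[a; bq^{-n}, b'; c; x, y] = \Phi^{(1)}[a; b, b'; c; x, y] - \frac{bx(1-a)}{1-c} \sum_{k=1}^n q^{-k} \Phi^{(1)}[aq; bq^{1-k}, b'; cq; x, y].$$
   Context: Let $q$ be a complex number with $0<|q|<1$. For complex $z$ and integer $m\ge 0$, $(z;q)_m=\prod_{j=0}^{m-1}(1-zq^j)$, with $(z;q)_0=1$. The $q$-Appell function $\Phi^{(1)}$ is $$\Phi^{(1)}[a; b, b'; c; x, y] = \sum_{m, n \geq 0} \frac{(a; q)_{m+n} (b; q)_m (b'; q)_n}{(q; q)_m (q; q)_n (c; q)_{m+n}} x^m y^n.$$ Identities are understood as identities of power series in $x,y$ (formal, or convergent for small $|x|,|y|$), with complex parameters chosen so that no denominator occurring vanishes. *)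

From HB Require Import structures.
From mathcomp Require Import all_boot all_order all_algebra.
From mathcomp Require Export complex.
Set Implicit Arguments. Unset Strict Implicit. Unset Printing Implicit Defensive.
Import Order.TTheory GRing.Theory Num.Theory.
Local Open Scope ring_scope.
Local Open Scope complex_scope.

Definition qpoch (R : rcfType) (z q : R[i]) (m : nat) : R[i] :=
  \prod_(j < m) (1 - z * q ^+ j).

(* Formal power series in two variables x, y over R[i]:
   s m n is the coefficient of x^m y^n. *)
Definition fps2 (R : rcfType) := nat -> nat -> R[i].

Definition fps2_add (R : rcfType) (s t : fps2 R) : fps2 R :=
  fun m n => s m n + t m n.
Definition fps2_scale (R : rcfType) (a : R[i]) (s : fps2 R) : fps2 R :=
  fun m n => a * s m n.
Definition fps2_mulx (R : rcfType) (s : fps2 R) : fps2 R :=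
  fun m n => if m is m'.+1 then s m' n else 0.
Definition fps2_sum (R : rcfType) (lo hi : nat) (F : nat -> fps2 R) : fps2 R :=
  fun m n => \sum_(lo <= k < hi) F k m n.

Definition Phi1 (R : rcfType) (q a b b' c : R[i]) : fps2 R :=
  fun m n => qpoch a q (m + n) * qpoch b q m * qpoch b' q n
             / (qpoch q q m * qpoch q q n * qpoch c q (m + n)).

From mathcomp Require Import all_boot all_order all_algebra complex.
From mathcomp Require Import ring.
From Stdlib Require Import FunctionalExtensionality.
Import Order.TTheory GRing.Theory Num.Theory.
Local Open Scope ring_scope.
Local Open Scope complex_scope.

(* Coefficientwise, the contiguous relation
     Phi1[a; bq, b'; c] - Phi1[a; b, b'; c] = b x (1 - a) / (1 - c) Phi1[aq; bq, b'; cq]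
   comes from (bq;q)_(m+1) - (b;q)_(m+1) = b (1 - q^(m+1)) (bq;q)_m, together with
   (a;q)_(m+n+1) = (1 - a) (aq;q)_(m+n) and the same for c and for (q;q)_(m+1).
   Both identities follow by telescoping it along b, bq, ..., bq^n and
   bq^-n, ..., bq^-1, b. *)

Lemma exprS_neq1 (T : numDomainType) (x : T) n : `|x| < 1 -> x ^+ n.+1 != 1.
Proof.
move=> x_lt1; apply: contraTneq x_lt1 => xn1.
have : `|x| ^+ n.+1 = 1 by rewrite -normrX xn1 normr1.
by move/eqP; rewrite pexpr_eq1 // => /eqP->; rewrite ltxx.
Qed.

Section QAppellContiguity.
Variable R : rcfType.
Implicit Types q z a b c : R[i].

Lemma fps2_ext (s t : fps2 R) : (forall m n, s m n = t m n) -> s = t.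
Proof.
by move=> st; apply: functional_extensionality => m;
  apply: functional_extensionality => n.
Qed.

Lemma qpochSl z q m : qpoch z q m.+1 = (1 - z) * qpoch (z * q) q m.
Proof.
rewrite /qpoch big_ord_recl expr0 mulr1; congr (_ * _).
by apply: eq_bigr => j _; rewrite exprS mulrA.
Qed.

Lemma qpochSr z q m : qpoch z q m.+1 = qpoch z q m * (1 - z * q ^+ m).
Proof. by rewrite /qpoch big_ord_recr. Qed.

Lemma qpoch_neq0 z q m : (forall j, 1 - z * q ^+ j != 0) -> qpoch z q m != 0.
Proof. by move=> z_adm; apply/prodf_neq0. Qed.

Lemma Phi1_row0_b q a b1 b2 b' c l : Phi1 q a b1 b' c 0 l = Phi1 q a b2 b' c 0 l.
Proof. by rewrite /Phi1 /qpoch !big_ord0. Qed.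

Variables q c : R[i].
Hypothesis q_not_unity : forall j, q ^+ j.+1 != 1.
Hypothesis c_adm : forall j, 1 - c * q ^+ j != 0.

Lemma Phi1_contiguous_b a b b' m l :
  Phi1 q a (b * q) b' c m.+1 l - Phi1 q a b b' c m.+1 l =
    b * (1 - a) / (1 - c) * Phi1 q (a * q) (b * q) b' (c * q) m l.
Proof.
have qq_adm j : 1 - q * q ^+ j != 0 by rewrite -exprS subr_eq0 eq_sym.
have cq_adm j : 1 - c * q * q ^+ j != 0 by rewrite -mulrA -exprS.
have c_neq1 : 1 - c != 0 by have := c_adm 0; rewrite mulr1.
have qq_m := qpoch_neq0 q q m qq_adm; have qq_l := qpoch_neq0 q q l qq_adm.
have cq_ml := qpoch_neq0 (c * q) q (m + l) cq_adm; have qSm := qq_adm m.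
rewrite /Phi1 addSn (qpochSr (b * q)) (qpochSr q) !qpochSl.
by field; apply/and5P.
Qed.

Lemma Phi1_shift_b_up a b b' n m l :
  Phi1 q a (b * q ^+ n) b' c m.+1 l - Phi1 q a b b' c m.+1 l =
    b * (1 - a) / (1 - c) *
      \sum_(1 <= k < n.+1) q ^ (k%:Z - 1) * Phi1 q (a * q) (b * q ^+ k) b' (c * q) m l.
Proof.
rewrite mulr_sumr (telescope_sumr_eq (fun k => Phi1 q a (b * q ^+ k.-1) b' c m.+1 l)) //=.
  by rewrite expr0 mulr1.
case=> // k _; rewrite /= exprSr mulrA Phi1_contiguous_b.
have -> : k.+1%:Z - 1 = k%:Z by rewrite -addn1 PoszD addrK.
by rewrite -exprnP; ring.
Qed.

Lemma Phi1_shift_b_down a b b' n m l : q != 0 ->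
  Phi1 q a b b' c m.+1 l - Phi1 q a (b * q ^- n) b' c m.+1 l =
    b * (1 - a) / (1 - c) *
      \sum_(1 <= k < n.+1) q ^- k * Phi1 q (a * q) (b * q ^ (1 - k%:Z)) b' (c * q) m l.
Proof.
move=> q_neq0.
rewrite mulr_sumr (telescope_sumr_eq (fun k => - Phi1 q a (b * q ^- k.-1) b' c m.+1 l)) //=.
  by rewrite expr0 invr1 mulr1 opprK addrC.
case=> // k _ /=.
have shift : b * q ^- k = b * q ^- k.+1 * q.
  by rewrite exprSr invfM -!mulrA mulVf ?mulr1.
rewrite opprK [RHS]addrC shift Phi1_contiguous_b.
have -> : b * q ^- k.+1 * q = b * q ^ (1 - k.+1%:Z).
  by rewrite -mulrA expfzDr // expr1z exprnN [q * _]mulrC.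
ring.
Qed.

End QAppellContiguity.

Theorem theorem3 (R : rcfType) (q a b b' c : R[i]) (n : nat) :
  0 < `|q| -> `|q| < 1 ->
  (forall j : nat, 1 - c * q ^+ j != 0) ->
  (0 < n)%N ->
  Phi1 q a (b * q ^+ n) b' c =
    fps2_add (Phi1 q a b b' c)
      (fps2_scale (b * (1 - a) / (1 - c))
        (fps2_mulx (fps2_sum 1 n.+1
          (fun k => fps2_scale (q ^ (k%:Z - 1)) (Phi1 q (a * q) (b * q ^+ k) b' (c * q))))))
  /\
  Phi1 q a (b * q ^- n) b' c =
    fps2_add (Phi1 q a b b' c)
      (fps2_scale (- (b * (1 - a) / (1 - c)))
        (fps2_mulx (fps2_sum 1 n.+1
          (fun k => fps2_scale (q ^- k) (Phi1 q (a * q) (b * q ^ (1 - k%:Z)) b' (c * q)))))).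
Proof.
move=> q_gt0 q_lt1 c_adm _.
have q_not_unity j : q ^+ j.+1 != 1 by exact: exprS_neq1.
have q_neq0 : q != 0 by rewrite -normr_gt0.
rewrite /fps2_add /fps2_scale /fps2_mulx /fps2_sum.
split; apply: fps2_ext => -[|m] l; rewrite /=.
- by rewrite mulr0 addr0; apply: Phi1_row0_b.
- by rewrite -Phi1_shift_b_up // addrC subrK.
- by rewrite mulr0 addr0; apply: Phi1_row0_b.
- by rewrite mulNr -Phi1_shift_b_down // opprB addrC subrK.
Qed.
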